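(* For every infinite set $X$ there exists a generic metric space of cardinality $\#X$. Specifically: fix a well-order $\le$ on $X$; let $G_o$ be the oriented graph on $X$ with an edge $(x,y)$ whenever $x<y$; let $H_o$ be obtained by replacing each oriented edge $e=(x,y)$ of $G_o$ with three new vertices $u_e,v_e,w_e$ and the four oriented edges $(x,u_e),(u_e,v_e),(v_e,y),(v_e,w_e)$; let $H=(V_H,E_H)$ be the underlying non-oriented graph. Then $H$ has trivial automorphism group, $\#V_H=\#X$, and for any $\varepsilon\in(0,1)$ the metric on $V_H$ with distance $1$ between distinct adjacent vertices and $1+\varepsilon$ between distinct non-adjacent vertices is a generic metric space with $s(V_H)=1$, $t(V_H)=1-\varepsilon$ and $e(V_H)=\varepsilon$.
   Context: For a metric space $M$ with $\#M\ge3$: $s(M)=\inf\{|xx'|: x\ne x'\}$; $t(M)=\inf\{|xx'|+|x'x''|-|xx''|: x,x',x''\text{ pairwise distinct}\}$; $e(M)=\inf\{\operatorname{dis}f: f\colon M\to M \text{ bijective}, f\ne\mathrm{id}\}$, where $\operatorname{dis}f=\sup_{x,x'}||xx'|-|f(x)f(x')||$. $M$ is called generic if $\#M\ge3$ and $s(M),t(M),e(M)$ are all positive. *)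

From HB Require Import structures.
From mathcomp Require Import all_boot all_order all_algebra.
From mathcomp Require Import all_classical all_reals.
From mathcomp Require Import ereal.
Set Implicit Arguments. Unset Strict Implicit. Unset Printing Implicit Defensive.
Import Order.TTheory GRing.Theory Num.Theory.
Local Open Scope ring_scope.
Local Open Scope classical_set_scope.

Definition is_metric (R : realType) (M : Type) (d : M -> M -> R) : Prop :=
  (forall x y, d x y = 0 <-> x = y) /\
  (forall x y, d x y = d y x) /\
  (forall x y z, d x z <= d x y + d y z).

Definition card_ge3 (M : Type) : Prop :=
  exists x y z : M, [/\ x <> y, y <> z & x <> z].

Definition s_inv (R : realType) (M : Type) (d : M -> M -> R) : \bar R :=
  ereal_inf [set r | exists x x' : M, x <> x' /\ r = (d x x')%:E].

Definition t_inv (R : realType) (M : Type) (d : M -> M -> R) : \bar R :=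
  ereal_inf [set r | exists x x' x'' : M,
     [/\ x <> x', x' <> x'', x <> x''
       & r = (d x x' + d x' x'' - d x x'')%:E]].

Definition dis (R : realType) (M : Type) (d : M -> M -> R) (f : M -> M) : \bar R :=
  ereal_sup [set r | exists x x' : M, r = (`|d x x' - d (f x) (f x')|)%:E].

Definition e_inv (R : realType) (M : Type) (d : M -> M -> R) : \bar R :=
  ereal_inf [set r | exists f : M -> M, [/\ bijective f, f <> id & r = dis d f]].

Definition generic (R : realType) (M : Type) (d : M -> M -> R) : Prop :=
  [/\ card_ge3 M, (0 < s_inv d)%E, (0 < t_inv d)%E & (0 < e_inv d)%E].

Definition well_order (X : Type) (lt : X -> X -> Prop) : Prop :=
  [/\ (forall x, ~ lt x x),
      (forall x y z, lt x y -> lt y z -> lt x z),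
      (forall x y, x = y \/ lt x y \/ lt y x)
    & well_founded lt].

Definition edgeG (X : Type) (lt : X -> X -> Prop) := {p : X * X | lt p.1 p.2}.

Inductive tag3 := TU | TV | TW.

(* vertex set V_H: the old vertices X plus u_e, v_e, w_e for each edge e *)
Definition VH (X : Type) (lt : X -> X -> Prop) : Type := (X + edgeG lt * tag3)%type.

Definition adjHo (X : Type) (lt : X -> X -> Prop) (a b : VH lt) : Prop :=
  match a, b with
  | inl x, inr (e, TU) => x = (proj1_sig e).1
  | inr (e, TU), inr (e', TV) => e = e'
  | inr (e, TV), inl y => y = (proj1_sig e).2
  | inr (e, TV), inr (e', TW) => e = e'
  | _, _ => False
  end.

Definition adjH (X : Type) (lt : X -> X -> Prop) (a b : VH lt) : Prop :=
  adjHo a b \/ adjHo b a.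

Definition trivial_aut (X : Type) (lt : X -> X -> Prop) : Prop :=
  forall f : VH lt -> VH lt, bijective f ->
    (forall a b, adjH a b <-> adjH (f a) (f b)) -> f = id.

Definition dH (R : realType) (X : Type) (lt : X -> X -> Prop) (eps : R)
    (a b : VH lt) : R :=
  if `[< a = b >] then 0 else if `[< adjH a b >] then 1 else 1 + eps.
Arguments dH {R X} lt eps a b.

From HB Require Import structures.
From mathcomp Require Import all_boot all_order all_algebra.
From mathcomp Require Import all_classical all_reals.
From mathcomp Require Import ereal.
From mathcomp Require Import lra.
From mathcomp Require wochoice.
Import Order.TTheory GRing.Theory Num.Theory.
Set Implicit Arguments. Unset Strict Implicit. Unset Printing Implicit Defensive.

(* In H every vertex of X has degree at least 3 and no leaf neighbour, whereas
   u_e has degree 2, v_e is adjacent to the leaf w_e and w_e is a leaf; and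
   x < y holds exactly when x and y are joined by a path of length 3 whose third
   vertex carries a leaf.  Hence an automorphism of H restricts to an order
   automorphism of the well-ordered set X, which is the identity, and then it
   fixes every u_e, v_e, w_e as well.
   All nonzero distances of d_eps lie in {1, 1 + eps}, which gives s = 1 and
   t = 1 - eps, and a bijection that is not the identity is not an
   automorphism, so it changes some distance by exactly eps.
   Finally #V_H = #X rests on Hessenberg's theorem #(X * X) = #X for infinite
   X, proved by Zorn's lemma on graphs of bijections A * A -> A. *)

Local Open Scope classical_set_scope.
Local Open Scope card_scope.

(** * Hessenberg's theorem *)

Lemma card_le_rel T (U : pointedType) (A : set T) (B : set U) (H : T -> U -> Prop) :
  (forall a b, A a -> H a b -> B b) ->
  (forall a a' b, A a -> A a' -> H a b -> H a' b -> a = a') ->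
  (forall a, A a -> exists b, H a b) -> A #<= B.
Proof.
move=> HB Hinj Htot.
have /choice[f Hf] : forall a, exists b, A a -> H a b.
  move=> a; case: (pselect (A a)) => [/Htot[b Hb]|nAa]; first by exists b.
  by exists point.
apply/pcard_leP/injfunPex; exists f => [a Aa|a a' /set_mem Aa /set_mem Aa' faa'].
  exact: HB Aa (Hf a Aa).
apply: (Hinj a a' (f a) Aa Aa' (Hf a Aa)); rewrite faa'; exact: Hf.
Qed.

Lemma card_le_total (T U : pointedType) (A : set T) (B : set U) :
  A #<= B \/ B #<= A.
Proof.
pose P (H : set (T * U)) := [/\ H `<=` A `*` B,
   forall a b b', H (a, b) -> H (a, b') -> b = b' &
   forall a a' b, H (a, b) -> H (a', b) -> a = a'].
have [H [[HAB Hfun Hinj] Hmax]] : exists H, P H /\ forall H', H `<` H' -> ~ P H'.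
  apply: Zorn_bigcup => F FP Ftot.
  have common q q' : (\bigcup_(X in F) X) q -> (\bigcup_(X in F) X) q' ->
      exists2 X, P X & X q /\ X q'.
    move=> [X FX Xq] [Y FY Yq']; have [XY|YX] := Ftot X Y FX FY.
      by exists Y; [exact: FP | split => //; apply: XY].
    by exists X; [exact: FP | split => //; apply: YX].
  split.
  - by move=> q [X /FP[+ _ _]]; apply.
  - by move=> a b b' Hb Hb'; have [X [_ + _] []] := common _ _ Hb Hb'; apply.
  - by move=> a a' b Ha Ha'; have [X [_ _ +] []] := common _ _ Ha Ha'; apply.
have [[a Aa nHa]|totA] :=
  pselect (exists2 a, A a & ~ exists b, H (a, b)); last first.
  left; apply: (card_le_rel (H := fun a b => H (a, b))).
  - by move=> a b _ /HAB[].
  - by move=> a a' b _ _; apply: Hinj.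
  - by move=> a Aa; apply: contrapT => nHa; apply: totA; exists a.
have [[b Bb nHb]|totB] :=
  pselect (exists2 b, B b & ~ exists a, H (a, b)); last first.
  right; apply: (card_le_rel (H := fun y x => H (x, y))).
  - by move=> y x _ /HAB[].
  - by move=> y y' x _ _; apply: Hfun.
  - by move=> y By; apply: contrapT => nHy; apply: totB; exists y.
exfalso; apply: (Hmax (H `|` [set (a, b)])).
  split=> [q Hq|/(_ (a, b) (or_intror erefl)) Hab]; first by left.
  by apply: nHa; exists b.
split.
- by move=> q [/HAB //|->].
- move=> x y y' [Hxy|[Ex Ey]] [Hxy'|[Ex' Ey']]; first exact: Hfun Hxy Hxy'.
  + by exfalso; apply: nHa; exists y; rewrite -Ex'.
  + by exfalso; apply: nHa; exists y'; rewrite -Ex.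
  + by rewrite Ey Ey'.
- move=> x x' y [Hxy|[Ex Ey]] [Hxy'|[Ex' Ey']]; first exact: Hinj Hxy Hxy'.
  + by exfalso; apply: nHb; exists x; rewrite -Ey'.
  + by exfalso; apply: nHb; exists x'; rewrite -Ey.
  + by rewrite Ex Ex'.
Qed.

Lemma Zorn_bigcup_above T (P : set (set T)) (A0 : set T) :
  (forall F : set (set T), F `<=` P -> total_on F subset ->
    P (\bigcup_(X in F) X)) ->
  P A0 -> exists A, [/\ A0 `<=` A, P A & forall B, A `<` B -> ~ P B].
Proof.
move=> Pchain PA0.
(* Adding A0 to the members of a chain keeps it a chain, and A0 itself can be
   thrown in, which takes care of the empty chain. *)
have [M [PM Mmax]] : exists M, P (A0 `|` M) /\ forall B, M `<` B -> ~ P (A0 `|` B).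
  apply: (Zorn_bigcup (P := fun M => P (A0 `|` M))) => F FP Ftot.
  have -> : A0 `|` \bigcup_(X in F) X =
            \bigcup_(Y in A0 |` [set A0 `|` X | X in F]) Y.
    apply/seteqP; split => x.
    - case=> [A0x|[X FX Xx]]; first by exists A0; [left|].
      by exists (A0 `|` X); [right; exists X|right].
    - by case=> _ [->|[X FX <-]]; [left|case=> ?; [left|right; exists X]].
  apply: Pchain => [_ [->|[X FX <-]] //|]; first exact: FP.
  move=> _ _ [->|[X FX <-]] [->|[Y FY <-]];
    try by [left | left; apply: subsetUl | right; apply: subsetUl].
  by have [XY|YX] := Ftot X Y FX FY; [left|right]; apply: setUS.
exists (A0 `|` M); split; [exact: subsetUl | exact: PM |].
move=> B [MB nBM] PB; apply: (Mmax B).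
  split; first by move=> x Mx; apply: MB; right.
  by move=> BM; apply: nBM => x /BM Mx; right.
by rewrite (setUidPr _ _).2 // => x A0x; apply: MB; left.
Qed.

Section SquareGraph.
Variable T : Type.
Implicit Types (A C : set T) (G : set (T * T * T)).

Definition gsupp G a := exists b c, G (a, b, c).

(* G is the graph of a bijection from A `*` A onto A. *)
Definition square_graph_on A G :=
  [/\ forall a b c, G (a, b, c) -> [/\ A a, A b & A c],
      forall a b, A a -> A b -> exists c, G (a, b, c),
      forall c, A c -> exists p, G (p, c),
      forall p c c', G (p, c) -> G (p, c') -> c = c' &
      forall p p' c, G (p, c) -> G (p', c) -> p = p'].

Definition square_graph G := square_graph_on (gsupp G) G.

Lemma gsuppS G G' : G `<=` G' -> gsupp G `<=` gsupp G'.
Proof. by move=> GG' a [b [c Gabc]]; exists b, c; apply: GG'. Qed.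

Lemma gsupp_square_graph_on A G : square_graph_on A G -> gsupp G = A.
Proof.
case=> G1 G2 _ _ _; apply/seteqP; split=> [a [b [c /G1[]//]]|a Aa].
by have [c Gc] := G2 a a Aa Aa; exists a, c.
Qed.

Lemma square_graph_onW A G : square_graph_on A G -> square_graph G.
Proof. by move=> GA; rewrite /square_graph (gsupp_square_graph_on GA). Qed.

Lemma square_graph_fun G : square_graph G ->
  exists2 g : T * T -> T, set_fun (gsupp G `*` gsupp G) (gsupp G) g &
    {in gsupp G `*` gsupp G &, injective g}.
Proof.
case=> G1 G2 _ G4 G5.
have /choice[g Gg] : forall p, exists c, gsupp G p.1 /\ gsupp G p.2 -> G (p, c).
  move=> [a b]; have [[Ga Gb]|nG] := pselect (gsupp G a /\ gsupp G b).
    by have [c Gc] := G2 a b Ga Gb; exists c.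
  by exists a.
exists g => [[a b] Gab|p q /set_mem Gp /set_mem Gq gpq].
  by have [] := G1 a b _ (Gg (a, b) Gab).
apply: (G5 p q (g p) (Gg p Gp)); rewrite gpq; exact: Gg.
Qed.

Lemma square_graph_bigcup (F : set (set (T * T * T))) :
  F `<=` square_graph -> total_on F subset -> square_graph (\bigcup_(X in F) X).
Proof.
move=> FG Ftot; apply: (@square_graph_onW (\bigcup_(X in F) gsupp X)).
have common X Y : F X -> F Y -> exists2 Z, F Z & X `<=` Z /\ Y `<=` Z.
  move=> FX FY; have [XY|YX] := Ftot X Y FX FY.
    by exists Y => //; split.
  by exists X => //; split.
split.
- move=> a b c [X FX Xabc]; have [X1 _ _ _ _] := FG X FX.
  by have [Xa Xb Xc] := X1 a b c Xabc; split; exists X.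
- move=> a b [X FX Xa] [Y FY Yb]; have [Z FZ [XZ YZ]] := common X Y FX FY.
  have [_ Z2 _ _ _] := FG Z FZ.
  by have [c Zc] := Z2 a b (gsuppS XZ Xa) (gsuppS YZ Yb); exists c, Z.
- move=> c [X FX Xc]; have [_ _ X3 _ _] := FG X FX.
  by have [p Xp] := X3 c Xc; exists p, X.
- move=> p c c' [X FX Xc] [Y FY Yc']; have [Z FZ [XZ YZ]] := common X Y FX FY.
  by have [_ _ _ Z4 _] := FG Z FZ; apply: Z4 (XZ _ Xc) (YZ _ Yc').
- move=> p p' c [X FX Xp] [Y FY Yp']; have [Z FZ [XZ YZ]] := common X Y FX FY.
  by have [_ _ _ _ Z5] := FG Z FZ; apply: Z5 (XZ _ Xp) (YZ _ Yp').
Qed.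

End SquareGraph.

Section SquareGraphExtension.
Variables (T : Type) (A C : set T) (G : set (T * T * T)) (k : T * T -> T).
Let D := (A `|` C) `*` (A `|` C) `\` A `*` A.
Hypotheses (GA : square_graph_on A G) (AC0 : A `&` C = set0) (k_bij : set_bij D C k).

Lemma square_graph_on_setU :
  square_graph_on (A `|` C) (G `|` [set q | D q.1 /\ q.2 = k q.1]).
Proof.
have [G1 G2 G3 G4 G5] := GA; have [k_fun k_inj k_surj] := k_bij.
have AC x : A x -> C x -> False.
  by move=> Ax Cx; have : (A `&` C) x by []; rewrite AC0.
split.
- move=> a b c [/G1[Aa Ab Ac]|[Dab /= ->]]; first by split; left.
  by case: (Dab) => -[ACa ACb] _; split=> //; right; apply: k_fun.
- move=> a b ACa ACb; have [[Aa Ab]|nAab] := pselect (A a /\ A b).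
    by have [c Gc] := G2 a b Aa Ab; exists c; left.
  by exists (k (a, b)); right.
- move=> c [/G3[p Gp]|/k_surj[p Dp kp]]; first by exists p; left.
  by exists p; right; split => //=; rewrite kp.
- move=> [a b] c c' [Gc|[Dp /= ->]] [Gc'|[Dp' /= ->]] //; first exact: G4 Gc Gc'.
  + by have [Aa Ab _] := G1 _ _ _ Gc; case: Dp' => _ [].
  + by have [Aa Ab _] := G1 _ _ _ Gc'; case: Dp => _ [].
- move=> [a b] [a' b'] c [Gp|[Dp /= kp]] [Gp'|[Dp' /= kp']].
  + exact: G5 Gp Gp'.
  + by have [_ _ Ac] := G1 _ _ _ Gp; case: (AC c) => //; rewrite kp'; apply: k_fun.
  + by have [_ _ Ac] := G1 _ _ _ Gp'; case: (AC c) => //; rewrite kp; apply: k_fun.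
  + by apply: k_inj; rewrite ?inE // -kp -kp'.
Qed.

End SquareGraphExtension.

Section SquareInjection.
Variables (T : pointedType) (A : set T) (g : T * T -> T) (a0 a1 : T).
Hypotheses (gA : set_fun (A `*` A) A g) (g_inj : {in A `*` A &, injective g}).
Hypotheses (Aa0 : A a0) (Aa1 : A a1) (a01 : a0 <> a1).

Lemma square_injP x y x' y' : A x -> A y -> A x' -> A y' ->
  g (x, y) = g (x', y') -> x = x' /\ y = y'.
Proof.
move=> Ax Ay Ax' Ay' E.
by have [] := g_inj (mem_set (conj Ax Ay) : (x, y) \in A `*` A)
                    (mem_set (conj Ax' Ay') : (x', y') \in A `*` A) E.
Qed.

Lemma setU_inj_into (B : set T) (h : T -> T) : set_fun B A h -> {in B &, injective h} ->
  exists2 s : T -> T, set_fun (A `|` B) A s & {in A `|` B &, injective s}.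
Proof.
move=> hA h_inj.
have hB x : (A `|` B) x -> ~ A x -> A (h x) by case=> // Bx _; apply: hA.
exists (fun x => if pselect (A x) then g (x, a0) else g (h x, a1)).
  by move=> x ABx; case: pselect => Ax; apply: gA; split => //=; apply: hB.
move=> x y /set_mem ABx /set_mem ABy; case: pselect => Ax; case: pselect => Ay E.
- by have [] := square_injP Ax Aa0 Ay Aa0 E.
- by have [_ /a01] := square_injP Ax Aa0 (hB y ABy Ay) Aa1 E.
- by have [_ /esym/a01] := square_injP (hB x ABx Ax) Aa1 Ay Aa0 E.
- have [hxy _] := square_injP (hB x ABx Ax) Aa1 (hB y ABy Ay) Aa1 E.
  by apply: h_inj hxy; apply/mem_set; [case: ABx|case: ABy].
Qed.

Lemma square_inj_of_compl_le : ~` A #<= A -> exists f : T * T -> T, injective f.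
Proof.
move=> /pcard_leP/injfunPex[h hA h_inj].
have [s sA s_inj] := setU_inj_into hA h_inj.
have ACs x : x \in A `|` ~` A by rewrite setUv; apply/mem_set.
have sA' x := sA x (set_mem (ACs x)).
exists (fun p => g (s p.1, s p.2)) => -[x y] [x' y'] /= E.
have [sx sy] := square_injP (sA' x) (sA' y) (sA' x') (sA' y') E.
by rewrite (s_inj x x' (ACs x) (ACs x') sx) (s_inj y y' (ACs y) (ACs y') sy).
Qed.

End SquareInjection.

Lemma square_graph_grow (T : pointedType) (G : set (T * T * T)) (a0 a1 : T) :
  square_graph G -> gsupp G a0 -> gsupp G a1 -> a0 <> a1 ->
  gsupp G #<= ~` gsupp G -> exists2 G', G `<` G' & square_graph G'.
Proof.
(* C := h @` A is a copy of A outside A, and the pairs of (A `|` C) `*` (A `|` C)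
   outside A `*` A are as many as the points of C, so G extends to A `|` C. *)
set A := gsupp G => GA Aa0 Aa1 a01 /pcard_leP/injfunPex[h hA h_inj].
have [g gA g_inj] := square_graph_fun GA.
pose C := h @` A.
have AC0 : A `&` C = set0.
  by apply/seteqP; split => // x [Ax [a Aa hax]]; apply: (hA a Aa); rewrite hax.
have AC x : A x -> ~ C x by move=> Ax Cx; have : (A `&` C) x by []; rewrite AC0.
have /choice[hinv hinvP] : forall c, exists a, C c -> A a /\ h a = c.
  move=> c; have [[a Aa hac]|nCc] := pselect (C c); first by exists a.
  by exists c.
have [s sA s_inj] : exists2 s : T -> T,
    set_fun (A `|` C) A s & {in A `|` C &, injective s}.
  apply: (setU_inj_into gA g_inj Aa0 Aa1 a01 (h := hinv)) => [c /hinvP[]//|].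
  move=> c c' /set_mem/hinvP[_ hc] /set_mem/hinvP[_ hc'] E.
  by rewrite -hc -hc' E.
have sA2 x y : (A `|` C) x -> (A `|` C) y -> A (g (s x, s y)).
  by move=> ACx ACy; apply: gA; split; apply: sA.
pose D := (A `|` C) `*` (A `|` C) `\` A `*` A.
have DC c : C c -> D (c, c) by move=> Cc; split=> [|[/AC]//]; split; right.
have [k k_bij] : exists k, set_bij D C k.
  apply/card_set_bijP; rewrite card_eq_le; apply/andP; split;
    apply/pcard_leP/injfunPex.
  - exists (fun p => h (g (s p.1, s p.2))) => [[x y] [[ACx ACy] _]|].
      by exists (g (s x, s y)) => //; apply: sA2.
    move=> [x y] [x' y'] /set_mem[[ACx ACy] _] /set_mem[[ACx' ACy'] _] /= E.
    have := h_inj _ _ (mem_set (sA2 x y ACx ACy)) (mem_set (sA2 x' y' ACx' ACy')) E.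
    move=> /(square_injP g_inj (sA _ ACx) (sA _ ACy) (sA _ ACx') (sA _ ACy'))[sx sy].
    by rewrite (s_inj x x' (mem_set ACx) (mem_set ACx') sx)
               (s_inj y y' (mem_set ACy) (mem_set ACy') sy).
  - by exists (fun c => (c, c)) => [c /DC|c c' _ _ []].
pose G' := G `|` [set q | D q.1 /\ q.2 = k q.1].
exists G'; last exact: square_graph_onW (square_graph_on_setU GA AC0 k_bij).
split=> [|G'G]; first exact: subsetUl.
have Cha0 : C (h a0) by exists a0.
have /G'G Gh : G' (h a0, h a0, k (h a0, h a0)) by right; split => //; apply: DC.
by apply: (AC (h a0)) => //; exists (h a0), (k (h a0, h a0)).
Qed.

Lemma infinite_nat_inj (T : pointedType) : infinite_set [set: T] ->
  exists iota : nat -> T, injective iota.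
Proof.
by move=> /infiniteP/pcard_injP[f f_inj]; exists f => m n; apply: f_inj; apply: mem_set.
Qed.

Lemma square_graph_on_range T (iota : nat -> T) (pi : nat * nat -> nat) :
  injective iota -> set_bij [set: nat * nat] [set: nat] pi ->
  square_graph_on (range iota)
    [set (iota p.1, iota p.2, iota (pi p)) | p in [set: nat * nat]].
Proof.
move=> iota_inj [_ pi_inj pi_surj]; split.
- move=> a b c [[m n] _ [<- <- <-]].
  by split; [exists m | exists n | exists (pi (m, n))].
- by move=> _ _ [m _ <-] [n _ <-]; exists (iota (pi (m, n))), (m, n).
- move=> _ [l _ <-]; have [[m n] _ pil] := pi_surj l I.
  by exists (iota m, iota n), (m, n) => //; rewrite pil.
- by move=> p c c' [[m n] _ [<- <-]] [[m' n'] _ [/iota_inj-> /iota_inj-> <-]].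
- move=> p p' c [[m n] _ [<- <-]] [[m' n'] _ [<- /iota_inj E]].
  by have [-> ->] := pi_inj (m', n') (m, n) (mem_set I) (mem_set I) E.
Qed.

Theorem infinite_square_inj (T : pointedType) : infinite_set [set: T] ->
  exists f : T * T -> T, injective f.
Proof.
move=> /infinite_nat_inj[iota iota_inj].
have /card_set_bijP[pi pi_bij] := card_nat2.
have G0A := square_graph_on_range iota_inj pi_bij.
have [G [G0G GA Gmax]] :=
  Zorn_bigcup_above (@square_graph_bigcup T) (square_graph_onW G0A).
have Aiota n : gsupp G (iota n).
  by apply: (gsuppS G0G); rewrite (gsupp_square_graph_on G0A); exists n.
have iota01 : iota 0 <> iota 1 by move/iota_inj.
have [g gA g_inj] := square_graph_fun GA.
have [|AnA] := card_le_total (~` gsupp G) (gsupp G).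
  exact: square_inj_of_compl_le gA g_inj (Aiota 0) (Aiota 1) iota01.
by have [G' /Gmax] := square_graph_grow GA (Aiota 0) (Aiota 1) iota01 AnA.
Qed.

(** * Rigidity of H *)

Lemma wf_mono_not_decr T (R : T -> T -> Prop) (p : T -> T) : well_founded R ->
  (forall x y, R x y -> R (p x) (p y)) -> forall x, ~ R (p x) x.
Proof.
move=> R_wf p_mono x; elim/(well_founded_ind R_wf): x => x IH pxx.
exact: IH _ pxx (p_mono _ _ pxx).
Qed.

Lemma four_points T (iota : nat -> T) : injective iota -> forall x : T,
  exists w1 w2 w3 : T,
    [/\ x <> w1, x <> w2, x <> w3 & [/\ w1 <> w2, w2 <> w3 & w1 <> w3]].
Proof.
move=> iota_inj x; have D i j : i <> j -> iota i <> iota j by move=> ij /iota_inj.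
have [->|x0] := pselect (x = iota 0).
  by exists (iota 1), (iota 2), (iota 3); do !split; apply: D.
have [->|x1] := pselect (x = iota 1).
  by exists (iota 0), (iota 2), (iota 3); do !split; apply: D.
have [->|x2] := pselect (x = iota 2).
  by exists (iota 0), (iota 1), (iota 3); do !split; apply: D.
by exists (iota 0), (iota 1), (iota 2); do !split => //; apply: D.
Qed.

Section GraphH.
Variables (X : Type) (lt : X -> X -> Prop).
Local Notation V := (VH lt).
Implicit Types (a b c m : V) (e : edgeG lt).

Lemma edgeG_inj e e' : sval e = sval e' -> e = e'.
Proof. by case: e e' => [p ltp] [p' ltp'] /= E; apply: eq_exist. Qed.

Lemma adjH_sym a b : adjH a b -> adjH b a.
Proof. by rewrite /adjH => -[]; auto. Qed.

Lemma adjH_irr a : ~ adjH a a.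
Proof. by case: a => [x|[e []]]; rewrite /adjH /=; tauto. Qed.

Lemma adjH_xu e : adjH (inl (sval e).1) (inr (e, TU)). Proof. by left. Qed.
Lemma adjH_uv e : adjH (inr (e, TU)) (inr (e, TV)). Proof. by left. Qed.
Lemma adjH_vy e : adjH (inr (e, TV)) (inl (sval e).2). Proof. by left. Qed.
Lemma adjH_vw e : adjH (inr (e, TV)) (inr (e, TW)). Proof. by left. Qed.

Lemma adjH_TW e m : adjH (inr (e, TW)) m -> m = inr (e, TV).
Proof. by case: m => [y|[e' []]]; rewrite /adjH /= => -[] // ->. Qed.

Lemma adjH_TU e m : adjH (inr (e, TU)) m -> m = inl (sval e).1 \/ m = inr (e, TV).
Proof. by case: m => [y|[e' []]]; rewrite /adjH /= => -[] // ->; auto. Qed.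

Lemma adjH_TV e m : adjH (inr (e, TV)) m ->
  [\/ m = inr (e, TU), m = inl (sval e).2 | m = inr (e, TW)].
Proof. by case: m => [y|[e' []]]; rewrite /adjH /= => -[] // ->; constructor. Qed.

Lemma adjH_inl x m : adjH (inl x) m -> exists e,
  (m = inr (e, TU) /\ (sval e).1 = x) \/ (m = inr (e, TV) /\ (sval e).2 = x).
Proof. by case: m => [y|[e []]]; rewrite /adjH /= => -[] // ->; exists e; auto. Qed.

Definition leaf a := exists n, adjH a n /\ forall m, adjH a m -> m = n.

Lemma not_leaf2 a b c : adjH a b -> adjH a c -> b <> c -> ~ leaf a.
Proof. by move=> ab ac bc [n [_ an]]; apply: bc; rewrite (an _ ab) (an _ ac). Qed.

Lemma leaf_TW e : leaf (inr (e, TW)).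
Proof. by exists (inr (e, TV)); split; [apply/adjH_sym/adjH_vw | apply: adjH_TW]. Qed.

Lemma not_leaf_TU e : ~ leaf (inr (e, TU)).
Proof. exact: not_leaf2 (adjH_sym (adjH_xu e)) (adjH_uv e) _. Qed.

Lemma not_leaf_TV e : ~ leaf (inr (e, TV)).
Proof. exact: not_leaf2 (adjH_sym (adjH_uv e)) (adjH_vw e) _. Qed.

Definition base_vertex a :=
  (~ exists l, adjH a l /\ leaf l) /\
  exists b c d, [/\ adjH a b, adjH a c, adjH a d & [/\ b <> c, c <> d & b <> d]].

Definition path3 a b :=
  exists c d, [/\ adjH a c, adjH c d, adjH d b & exists l, adjH d l /\ leaf l].

Lemma not_base_inr e t : ~ base_vertex (inr (e, t)).
Proof.
case: t => -[nl [b [c [d [ab ac ad [bc cd bd]]]]]].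
- by case: (adjH_TU ab) (adjH_TU ac) (adjH_TU ad) => Eb [] Ec [] Ed; subst.
- by apply: nl; exists (inr (e, TW)); split; [apply: adjH_vw | apply: leaf_TW].
- by apply: bc; rewrite (adjH_TW ab) (adjH_TW ac).
Qed.

Definition is_aut (f g : V -> V) :=
  [/\ cancel f g, cancel g f & forall a b, adjH a b <-> adjH (f a) (f b)].

Section Automorphism.
Variables (f g : V -> V).
Hypothesis fg_aut : is_aut f g.

Lemma is_aut_sym : is_aut g f.
Proof.
have [fgK gfK fadj] := fg_aut; split => // a b.
split=> [ab|/(fadj (g a) (g b)).1]; last by rewrite !gfK.
by apply: (fadj (g a) (g b)).2; rewrite !gfK.
Qed.

Lemma aut_adjH a b : adjH a b -> adjH (f a) (f b).
Proof. by have [_ _ fadj] := fg_aut; apply: (fadj a b).1. Qed.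

Lemma aut_adjHV a b : adjH (f a) (f b) -> adjH a b.
Proof. by have [_ _ fadj] := fg_aut; apply: (fadj a b).2. Qed.

Lemma aut_leaf a : leaf a -> leaf (f a).
Proof.
have [fgK gfK _] := fg_aut; move=> [n [an nU]]; exists (f n).
split=> [|m fam]; first exact: aut_adjH.
have /nU <- // : adjH a (g m) by apply: aut_adjHV; rewrite gfK.
Qed.

End Automorphism.

Lemma aut_base f g a : is_aut f g -> base_vertex a -> base_vertex (f a).
Proof.
move=> fa; have [fgK gfK _] := fa.
case=> nl [b [c [d [ab ac ad [bc cd bd]]]]]; split.
  move=> [l [al ll]]; apply: nl; exists (g l); split.
    by apply: (aut_adjHV fa); rewrite gfK.
  by rewrite -[l]gfK in ll; have := aut_leaf (is_aut_sym fa) ll; rewrite fgK.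
exists (f b), (f c), (f d); split; try exact: (aut_adjH fa).
by split => /(can_inj fgK).
Qed.

Lemma aut_path3 f g a b : is_aut f g -> path3 a b -> path3 (f a) (f b).
Proof.
move=> fa [c [d [ac cd db [l [dl ll]]]]].
exists (f c), (f d); split; try exact: (aut_adjH fa).
by exists (f l); split; [apply: (aut_adjH fa) | apply: (aut_leaf fa)].
Qed.

Section WellOrdered.
Hypothesis lt_wo : well_order lt.
Hypothesis X_ge4 : forall x : X, exists w1 w2 w3 : X,
  [/\ x <> w1, x <> w2, x <> w3 & [/\ w1 <> w2, w2 <> w3 & w1 <> w3]].

Lemma adjH_inl_edge x y : x <> y -> exists e t,
  adjH (inl x) (inr (e, t)) /\ (sval e = (x, y) \/ sval e = (y, x)).
Proof.
have [_ _ lt_total _] := lt_wo; move=> xy.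
have [//|[ltxy|ltyx]] := lt_total x y.
  pose e : edgeG lt := exist _ (x, y) ltxy.
  by exists e, TU; split; [apply: (adjH_xu e)|left].
pose e : edgeG lt := exist _ (y, x) ltyx.
by exists e, TV; split; [apply/adjH_sym/(adjH_vy e)|right].
Qed.

Lemma adjH_inl3 x : exists b c d,
  [/\ adjH (inl x) b, adjH (inl x) c, adjH (inl x) d & [/\ b <> c, c <> d & b <> d]].
Proof.
have [w1 [w2 [w3 [xw1 xw2 xw3 [w12 w23 w13]]]]] := X_ge4 x.
have [e1 [t1 [a1 E1]]] := adjH_inl_edge xw1.
have [e2 [t2 [a2 E2]]] := adjH_inl_edge xw2.
have [e3 [t3 [a3 E3]]] := adjH_inl_edge xw3.
have edge_end w w' (e e' : edgeG lt) t t' : x <> w ->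
    (sval e = (x, w) \/ sval e = (w, x)) -> (sval e' = (x, w') \/ sval e' = (w', x)) ->
    inr (e, t) = inr (e', t') :> V -> w = w'.
  move=> xw Ee Ee' [ee' _]; rewrite -ee' in Ee'.
  move: Ee'; case: Ee => -> [] /pair_equal_spec[Ex Ew] //.
  - by case: xw; rewrite Ew.
  - by case: xw; rewrite Ex.
exists (inr (e1, t1)), (inr (e2, t2)), (inr (e3, t3)); split => //; split.
- by move=> /(edge_end _ _ _ _ _ _ xw1 E1 E2).
- by move=> /(edge_end _ _ _ _ _ _ xw2 E2 E3).
- by move=> /(edge_end _ _ _ _ _ _ xw1 E1 E3).
Qed.

Lemma not_leaf_inl x : ~ leaf (inl x).
Proof. by have [b [c [_ [xb xc _ [bc _ _]]]]] := adjH_inl3 x; apply: not_leaf2 xb xc bc. Qed.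

Lemma base_inl x : base_vertex (inl x).
Proof.
split; last exact: adjH_inl3.
move=> [l [/adjH_inl[e [[-> _]|[-> _]]] ll]].
  exact: not_leaf_TU ll.
exact: not_leaf_TV ll.
Qed.

Lemma path3_inlE x y : path3 (inl x) (inl y) <-> lt x y.
Proof.
split=> [[c [d [/adjH_inl[e [[-> ex]|[-> ex]]] cd db [l [dl ll]]]]]|ltxy].
- move: db dl; case: (adjH_TU cd) => -> db _.
    by have [e' [[]|[]]] := adjH_inl (adjH_sym db).
  by case: (adjH_TV db) => // -[->]; rewrite -ex; exact: (proj2_sig e).
- move: db dl; case: (adjH_TV cd) => -> db dl.
  + case: (adjH_TU dl) => El; rewrite El in ll.
      by case: (not_leaf_inl ll).
    by case: (not_leaf_TV ll).
  + by have [e' [[]|[]]] := adjH_inl (adjH_sym db).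
  + by have := adjH_TW db.
- pose e : edgeG lt := exist _ (x, y) ltxy.
  exists (inr (e, TU)), (inr (e, TV)); split.
  + exact: (adjH_xu e).
  + exact: adjH_uv.
  + exact: (adjH_vy e).
  + by exists (inr (e, TW)); split; [apply: adjH_vw | apply: leaf_TW].
Qed.

Section Automorphism.
Variables (f g : V -> V).
Hypothesis fg_aut : is_aut f g.

Lemma aut_inl : exists phi : X -> X, forall x, f (inl x) = inl (phi x).
Proof.
have /choice[phi fphi] : forall x, exists y, f (inl x) = inl y.
  move=> x; have := aut_base fg_aut (base_inl x).
  by case: (f (inl x)) => [y|[e t] /not_base_inr//]; exists y.
by exists phi.
Qed.

Lemma aut_lt (phi : X -> X) : (forall x, f (inl x) = inl (phi x)) ->
  forall x y, lt x y -> lt (phi x) (phi y).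
Proof.
by move=> fphi x y /path3_inlE/(aut_path3 fg_aut); rewrite !fphi => /path3_inlE.
Qed.

End Automorphism.

Section Fixpoints.
Variables (f g : V -> V).
Hypothesis fg_aut : is_aut f g.

Lemma aut_fix_inl x : f (inl x) = inl x.
Proof.
have [fgK _ _] := fg_aut; have gf_aut := is_aut_sym fg_aut.
have [phi fphi] := aut_inl fg_aut; have [psi gpsi] := aut_inl gf_aut.
have psiK y : psi (phi y) = y by have := fgK (inl y); rewrite fphi gpsi => -[].
have [_ _ lt_total lt_wf] := lt_wo.
rewrite fphi; have [->//|[ltphi|ltphi]] := lt_total (phi x) x; exfalso.
  exact: wf_mono_not_decr lt_wf (aut_lt fg_aut fphi) _ ltphi.
have := aut_lt gf_aut gpsi ltphi; rewrite psiK.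
exact: wf_mono_not_decr lt_wf (aut_lt gf_aut gpsi) x.
Qed.

Lemma aut_fix_TU_TV e :
  f (inr (e, TU)) = inr (e, TU) /\ f (inr (e, TV)) = inr (e, TV).
Proof.
have [fgK _ _] := fg_aut.
have := aut_adjH fg_aut (adjH_xu e); rewrite aut_fix_inl.
move=> /adjH_inl[e' [[Eu e1]|[Eu e2]]]; last first.
  have gf_aut := is_aut_sym fg_aut.
  have := aut_leaf gf_aut (leaf_TW e').
  have := aut_adjH gf_aut (adjH_vw e'); rewrite -Eu fgK.
  by case/adjH_TU => ->; [move/not_leaf_inl | move/not_leaf_TV].
have := aut_adjH fg_aut (adjH_uv e); rewrite Eu => /adjH_TU[|Ev].
  by rewrite -aut_fix_inl => /(can_inj fgK).
have := aut_adjH fg_aut (adjH_vy e); rewrite Ev aut_fix_inl => /adjH_TV[]// [e2].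
have -> // : e' = e.
by apply: edgeG_inj; case: (sval e') (sval e) e1 e2 => ? ? [? ?] /= -> ->.
Qed.

Lemma aut_fix_TW e : f (inr (e, TW)) = inr (e, TW).
Proof.
have [fgK _ _] := fg_aut; have [fu fv] := aut_fix_TU_TV e.
have := aut_adjH fg_aut (adjH_vw e); rewrite fv => /adjH_TV[]// E.
  by move: E; rewrite -fu => /(can_inj fgK).
by move: E; rewrite -aut_fix_inl => /(can_inj fgK).
Qed.

End Fixpoints.

Lemma trivial_aut_H : trivial_aut lt.
Proof.
move=> f [g fgK gfK] fadj; have fg_aut : is_aut f g by split.
apply: funext => -[x|[e []]] /=; first exact: (aut_fix_inl fg_aut).
- exact: (aut_fix_TU_TV fg_aut e).1.
- exact: (aut_fix_TU_TV fg_aut e).2.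
- exact: (aut_fix_TW fg_aut).
Qed.

End WellOrdered.
End GraphH.

(** * The metric on V_H *)

Definition transp T (a b z : T) : T :=
  if `[< z = a >] then b else if `[< z = b >] then a else z.

Lemma transpK T (a b : T) : a <> b -> involutive (transp a b).
Proof.
move=> ab; have ta : transp a b a = b by rewrite /transp asboolT.
have tb : transp a b b = a by rewrite /transp asboolF ?asboolT // => /esym.
move=> z; have [->|za] := pselect (z = a); first by rewrite ta tb.
have [->|zb] := pselect (z = b); first by rewrite tb ta.
have tz : transp a b z = z by rewrite /transp !asboolF.
by rewrite !tz.
Qed.

Lemma transp_neq_id T (a b : T) : a <> b -> transp a b <> id.
Proof. by move=> ab /(congr1 (@^~ a)); rewrite /transp asboolT // => /esym. Qed.

Local Open Scope ring_scope.

Section MetricH.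
Variables (R : realType) (X : Type) (lt : X -> X -> Prop) (eps : R).
Hypothesis eps_ge0 : 0 <= eps.
Local Notation V := (VH lt).
Local Notation d := (dH lt eps).
Implicit Types (a b c : V) (e : edgeG lt).

Lemma dH_id a : d a a = 0.
Proof. by rewrite /dH asboolT. Qed.

Lemma dH_adj a b : a <> b -> adjH a b -> d a b = 1.
Proof. by move=> ab adj; rewrite /dH asboolF // asboolT. Qed.

Lemma dH_nadj a b : a <> b -> ~ adjH a b -> d a b = 1 + eps.
Proof. by move=> ab nadj; rewrite /dH !asboolF. Qed.

Lemma dH_bounds a b : a <> b -> 1 <= d a b <= 1 + eps.
Proof.
move=> ab; have [adj|nadj] := pselect (adjH a b).
  by rewrite dH_adj // lexx lerDl.
by rewrite dH_nadj // lexx lerDl andbT.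
Qed.

Lemma dH_ge0 a b : 0 <= d a b.
Proof.
have [->|ab] := pselect (a = b); first by rewrite dH_id.
by have /andP[+ _] := dH_bounds ab; apply: le_trans.
Qed.

Lemma dH_sym a b : d a b = d b a.
Proof.
have [->//|ab] := pselect (a = b); have ba : b <> a by move/esym.
have [adj|nadj] := pselect (adjH a b).
  by rewrite !dH_adj //; apply: adjH_sym.
by rewrite !dH_nadj // => /adjH_sym.
Qed.

Lemma dH_metric : eps <= 1 -> is_metric d.
Proof.
move=> eps_le1; split; [|split; first exact: dH_sym].
  move=> a b; split=> [|->]; last exact: dH_id.
  move=> dab0; apply: contrapT => ab; have /andP[] := dH_bounds ab; lra.
move=> a b c; have [->|ac] := pselect (a = c).
  by rewrite dH_id addr_ge0 // dH_ge0.
have [<-|ab] := pselect (a = b); first by rewrite dH_id add0r.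
have [->|bc] := pselect (b = c); first by rewrite dH_id addr0.
have /andP[_] := dH_bounds ac; have /andP[+ _] := dH_bounds ab.
have /andP[+ _] := dH_bounds bc; lra.
Qed.

Lemma s_inv_dH e : s_inv d = 1%:E.
Proof.
apply/le_anti/andP; split.
  apply: ereal_inf_lbound; exists (inl (sval e).1), (inr (e, TU)); split=> //.
  by rewrite dH_adj //; apply: adjH_xu.
apply: le_ereal_inf_tmp => _ [a [b [ab ->]]].
by rewrite lee_fin; have /andP[] := dH_bounds ab.
Qed.

Lemma t_inv_dH e : (forall x, ~ lt x x) -> t_inv d = (1 - eps)%:E.
Proof.
move=> lt_irr; apply/le_anti/andP; split.
  apply: ereal_inf_lbound.
  exists (inl (sval e).1), (inr (e, TU)), (inr (e, TV)); split=> //.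
  rewrite dH_adj //; last exact: adjH_xu.
  rewrite dH_adj //; last exact: adjH_uv.
  have xv : ~ adjH (inl (sval e).1) (inr (e, TV)).
    by case=> //= E; apply: (lt_irr (sval e).1); rewrite {2}E; exact: (proj2_sig e).
  rewrite dH_nadj //.
  congr (_%:E); lra.
apply: le_ereal_inf_tmp => _ [a [b [c [ab bc ac ->]]]]; rewrite lee_fin.
have /andP[+ _] := dH_bounds ab; have /andP[+ _] := dH_bounds bc.
have /andP[_] := dH_bounds ac; lra.
Qed.

Lemma dis_dH f : trivial_aut lt -> bijective f -> f <> id -> dis d f = eps%:E.
Proof.
move=> rigid f_bij f_neq_id; have f_inj := bij_inj f_bij.
apply/le_anti/andP; split.
  apply: ge_ereal_sup => _ [a [b ->]]; rewrite lee_fin.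
  have [->|ab] := pselect (a = b); first by rewrite !dH_id subrr normr0.
  have fab : f a <> f b by move/f_inj.
  have /andP[? ?] := dH_bounds ab; have /andP[? ?] := dH_bounds fab.
  rewrite ler_norml; apply/andP; split; lra.
have [a [b nab]] : exists a b, ~ (adjH a b <-> adjH (f a) (f b)).
  apply: contrapT => nex; apply: f_neq_id; apply: rigid => // a b.
  by apply: contrapT => nab; apply: nex; exists a, b.
have ab : a <> b by move=> E; apply: nab; rewrite E; split=> /adjH_irr.
have fab : f a <> f b by move/f_inj.
apply: le_ereal_sup_tmp; exists (`|d a b - d (f a) (f b)|%:E); first by exists a, b.
rewrite lee_fin; have [adj|nadj] := pselect (adjH a b).
  rewrite dH_adj // dH_nadj // => [|fadj]; last by apply: nab.
  by rewrite opprD addrA subrr sub0r normrN ger0_norm.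
rewrite dH_nadj // dH_adj // => [|]; last by apply: contrapT => nfadj; apply: nab.
by rewrite addrC addKr ger0_norm.
Qed.

Lemma e_inv_dH e : trivial_aut lt -> e_inv d = eps%:E.
Proof.
move=> rigid; rewrite /e_inv.
have u_neq_x : (inr (e, TU) : V) <> inl (sval e).1 by [].
suff -> : [set r | exists f : V -> V, [/\ bijective f, f <> id & r = dis d f]] =
          [set eps%:E] by rewrite ereal_inf1.
apply/seteqP; split=> [_ [f [f_bij f_neq_id ->]]|_ ->]; first exact: dis_dH.
pose t := transp (inr (e, TU) : V) (inl (sval e).1).
have t_bij : bijective t by exists t; apply: transpK.
have t_neq_id : t <> id by apply: transp_neq_id.
by exists t; split=> //; rewrite dis_dH.
Qed.

Lemma generic_dH e : (forall x, ~ lt x x) -> trivial_aut lt -> 0 < eps < 1 ->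
  generic d.
Proof.
move=> lt_irr rigid /andP[eps_gt0 eps_lt1]; split.
- by exists (inl (sval e).1), (inr (e, TU)), (inr (e, TV)).
- by rewrite (s_inv_dH e) lte_fin.
- by rewrite (t_inv_dH e lt_irr) lte_fin subr_gt0.
- by rewrite (e_inv_dH e rigid) lte_fin.
Qed.

End MetricH.

(** * Cardinality of V_H *)

Lemma card_le_setT T U (f : T -> U) : injective f -> [set: T] #<= [set: U].
Proof.
move=> f_inj; have [F] : $|{injfun [set: T] >-> [set: U]}|.
  by apply/injfunPex; exists f => // x y _ _; apply: f_inj.
exact: inj_card_le.
Qed.

Definition tag3_index (t : tag3) : nat := match t with TU => 0 | TV => 1 | TW => 2 end.

Lemma card_VH (X : pointedType) (lt : X -> X -> Prop) :
  infinite_set [set: X] -> [set: VH lt] #= [set: X].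
Proof.
move=> Xinf; have [iota iota_inj] := infinite_nat_inj Xinf.
have [f2 f2_inj] := infinite_square_inj Xinf.
rewrite card_eq_le; apply/andP; split.
  2: by apply: (@card_le_setT _ _ inl) => x y [].
pose code (v : VH lt) := match v with
  | inl x => (x, iota 3) | inr (e, t) => (f2 (sval e), iota (tag3_index t)) end.
apply: (@card_le_setT _ _ (f2 \o code)) => v w /f2_inj.
case: v w => [x|[e t]] [y|[e' t']] /pair_equal_spec[E /iota_inj Et] //=.
- by rewrite E.
- by case: t' Et.
- by case: t Et.
- have -> : e = e' by apply: edgeG_inj; apply: f2_inj.
  by case: t t' Et => -[].
Qed.

Lemma well_order_exists (T : eqType) : exists lt : T -> T -> Prop, well_order lt.
Proof.
have [R R_wo] := wochoice.well_ordering_principle T.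
have R_woT : wochoice.wo_chain R predT by apply: wochoice.withinW.
have R_refl x : R x x by apply: wochoice.wo_chain_reflexive R_woT _ _.
have R_anti x y : R x y -> R y x -> x = y.
  move=> Rxy Ryx; apply: (wochoice.wo_chain_antisymmetric R_woT) => //.
  by rewrite Rxy.
have R_total x y : R x y || R y x by apply: (wochoice.wo_chainW R_woT).
have R_trans x y z : R x y -> R y z -> R x z.
  move=> Rxy Ryz.
  have [|m [[/or3P[]/eqP-> m_lb] _]] := R_wo [pred w | [|| w == x, w == y | w == z]].
  - by exists x; rewrite inE eqxx.
  - by apply: m_lb; rewrite inE eqxx !orbT.
  - by rewrite (R_anti x y Rxy) //; apply: m_lb; rewrite inE eqxx.
  - by rewrite -(R_anti y z Ryz) //; apply: m_lb; rewrite inE eqxx orbT.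
exists (fun x y => R x y /\ x <> y); split.
- by move=> x [].
- move=> x y z [Rxy nxy] [Ryz nyz]; split; first exact: R_trans Rxy Ryz.
  by move=> xz; apply: nxy; apply: R_anti => //; rewrite xz.
- move=> x y; have [->|nxy] := pselect (x = y); first by left.
  by right; have /orP[] := R_total x y; [left|right] => //; split => // /esym.
- move=> x; apply: contrapT => nacc.
  have [|m [[+ m_lb] _]] :=
      R_wo [pred w | ~~ `[< Acc (fun x y => R x y /\ x <> y) w >]].
    by exists x; rewrite inE; apply/asboolPn.
  rewrite inE => /asboolPn; apply; constructor => y [Rym nym].
  apply: contrapT => nacc_y; apply: nym; apply: R_anti => //.
  by apply: m_lb; rewrite inE; apply/asboolPn.
Qed.

Lemma VH_generic_metric (R : realType) (X : pointedType) (lt : X -> X -> Prop) :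
  infinite_set [set: X] -> well_order lt ->
  [/\ trivial_aut lt, [set: VH lt] #= [set: X]
    & forall eps : R, 0 < eps < 1 ->
      [/\ is_metric (dH lt eps), generic (dH lt eps), s_inv (dH lt eps) = 1%:E,
          t_inv (dH lt eps) = (1 - eps)%:E & e_inv (dH lt eps) = eps%:E]].
Proof.
move=> Xinf lt_wo; have [lt_irr _ lt_total _] := lt_wo.
have [iota iota_inj] := infinite_nat_inj Xinf.
have rigid := trivial_aut_H lt_wo (four_points iota_inj).
have [e] : exists e : edgeG lt, True.
  have [/iota_inj //|[lt01|lt10]] := lt_total (iota 0) (iota 1).
    by exists (exist _ (iota 0, iota 1) lt01).
  by exists (exist _ (iota 1, iota 0) lt10).
split=> // [|eps eps01]; first exact: card_VH.
have /andP[/ltW eps_ge0 /ltW eps_le1] := eps01.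
split; [exact: dH_metric | exact: generic_dH | exact: s_inv_dH |
        exact: t_inv_dH | exact: e_inv_dH].
Qed.

Theorem mainTheorem19 (R : realType) (X : Type) :
  infinite_set [set: X] ->
  (exists (M : Type) (d : M -> M -> R),
      [/\ is_metric d, generic d & [set: M] #= [set: X]]) /\
  (forall lt : X -> X -> Prop, well_order lt ->
     [/\ trivial_aut lt,
         [set: VH lt] #= [set: X]
       & forall eps : R, 0 < eps < 1 ->
           [/\ is_metric (dH lt eps), generic (dH lt eps),
               s_inv (dH lt eps) = 1%:E,
               t_inv (dH lt eps) = (1 - eps)%:E
             & e_inv (dH lt eps) = eps%:E]]).
Proof.
elim/Ppointed: X => X Xinf.
  by case: Xinf; rewrite (empty_eq0 [set: X]); exact: finite_set0.
split=> [|lt]; last exact: VH_generic_metric.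
have [lt lt_wo] := well_order_exists X.
have [_ VX /(_ (1 / 2))[|d_metric d_generic _ _ _]] := VH_generic_metric R Xinf lt_wo.
  by apply/andP; split; lra.
by exists (VH lt), (dH lt (1 / 2)).
Qed.
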